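(* Let $n\ge1$; for $i\in[n]$ let $d_i\ge1$ be an integer, $p_{i0}<\cdots<p_{id_i}$ reals, $\mathcal{X}=\prod_i\{p_{i0},\dots,p_{id_i}\}$, and $f_i:\{p_{i0},\dots,p_{id_i}\}\to[L_i,U_i]$. Let $\phi:\prod_i[L_i,U_i]\to\mathbb{R}$ be supermodular. Let $\sigma=(\sigma_1,\dots,\sigma_n)$ where each $\sigma_i$ is a permutation of $\{0,\dots,d_i\}$ with $f_i(p_{i,\sigma_i(0)})\le f_i(p_{i,\sigma_i(1)})\le\cdots\le f_i(p_{i,\sigma_i(d_i)})$, and let $\psi^\sigma(\boldsymbol{j})=\phi(f_1(p_{1,\sigma_1(j_1)}),\dots,f_n(p_{n,\sigma_n(j_n)}))$ for $\boldsymbol{j}\in\mathcal{G}$. Then the set $$E=\Bigl\{(\boldsymbol{x},\boldsymbol{z},\mu):\boldsymbol{z}\in\{0,1\}^N,\ (x_i,\boldsymbol{z}_i)\in B_i\ \forall i,\ \boldsymbol{z}'=(L^\sigma)^{-1}(\boldsymbol{z}),\ \mu\le\psi^\sigma(\boldsymbol{j}^0)+\sum_{t\in[N]}\bigl(\psi^\sigma(\boldsymbol{j}^t)-\psi^\sigma(\boldsymbol{j}^{t-1})\bigr)z'_{\pi_t}\ \forall\pi\in\Pi\Bigr\}$$ (where for each $\pi$, $\boldsymbol{j}^0,\dots,\boldsymbol{j}^N$ is its point representation) is an ideal MIP formulation of the hypograph $\{(\boldsymbol{x},\mu)\in\mathcal{X}\times\mathbb{R}:\mu\le\phi(f_1(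x_1),\dots,f_n(x_n))\}$.
   Context: $[n]=\{1,\dots,n\}$, $N=\sum_i d_i$. A function $g$ on a set $X\subseteq\mathbb{R}^n$ closed under componentwise max $\vee$ and min $\wedge$ is supermodular if $g(\boldsymbol{x}\vee\boldsymbol{y})+g(\boldsymbol{x}\wedge\boldsymbol{y})\ge g(\boldsymbol{x})+g(\boldsymbol{y})$ for all $\boldsymbol{x},\boldsymbol{y}$. $\Delta^d=\{\boldsymbol{z}\in\mathbb{R}^d:1\ge z_1\ge\cdots\ge z_d\ge0\}$; variables $\boldsymbol{z}=(\boldsymbol{z}_1,\dots,\boldsymbol{z}_n)$, $\boldsymbol{z}_i\in\mathbb{R}^{d_i}$. $B_i=\{(x_i,\boldsymbol{z}_i):x_i=p_{i0}+\sum_{j\in[d_i]}(p_{ij}-p_{i,j-1})z_{ij},\ \boldsymbol{z}_i\in\Delta^{d_i}\}$. $\mathcal{G}=\prod_i\{0,1,\dots,d_i\}$. A staircase is a sequence $\pi=(\pi_1,\dots,\pi_N)$ with $\pi_t=(\pi_t(1),\pi_t(2))$, $\pi_t(1)\in[n]$, each $i$ occurring as $\pi_t(1)$ for exactly $d_i$ values of $t$, and $\pi_t(2)=|\{s\le t:\pi_s(1)=\pi_t(1)\}|$; $\Pi$ is the set of all staircases; $z'_{\pi_t}:=z'_{\pi_t(1),\pi_t(2)}$. Its point representation is $\boldsymbol{j}^0=(0,\dots,0)$, $\boldsymbol{j}^t=\boldsymbol{j}^{t-1}+\boldsymbol{e}_{\pi_t(1)}$ ($\boldsymbol{e}_i$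 the $i$-th unit vector of $\mathbb{R}^n$). For each $i$, let $T_i:\mathbb{R}^{d_i}\to\mathbb{R}^{d_i+1}$, $\lambda_{ij}=z_{ij}-z_{i,j+1}$ for $j=0,\dots,d_i$ with conventions $z_{i0}=1$, $z_{i,d_i+1}=0$; its inverse is $z_{ij}=\sum_{k=j}^{d_i}\lambda_{ik}$, $j\in[d_i]$. Let $P^{\sigma_i}\in\mathbb{R}^{(d_i+1)\times(d_i+1)}$ have entry $(j,k)$ equal to $1$ if $j=\sigma_i(k)$ and $0$ otherwise. Define $L^{\sigma_i}(\boldsymbol{z}'_i)=T_i^{-1}(P^{\sigma_i}T_i(\boldsymbol{z}'_i))$ and $L^\sigma(\boldsymbol{z}')=(L^{\sigma_1}(\boldsymbol{z}'_1),\dots,L^{\sigma_n}(\boldsymbol{z}'_n))$, an invertible affine map with inverse $(L^\sigma)^{-1}$. An MIP formulation of a set $S$ is a polyhedron with binary restrictions on some variables whose projection onto the original variables equals $S$; it is ideal if every vertex of the LP relaxation (binary restrictions dropped) has those variables binary. *)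

From HB Require Import structures.
From mathcomp Require Import all_boot all_order all_algebra.
From mathcomp Require Import fingroup perm.
From mathcomp Require Import reals.
Set Implicit Arguments. Unset Strict Implicit. Unset Printing Implicit Defensive.
Import Order.TTheory GRing.Theory Num.Theory.
Local Open Scope ring_scope.

(* Indexing conventions: [n] is 'I_n; the paper's index j in [d] (1-based)
   of z_i in R^{d_i} is stored at position j-1 of 'I_(d_i) -> R;
   p_{i0..id_i}, permutations and lambda use 'I_(d_i).+1 (0-based, 0..d_i). *)

Section Defs.
Variable R : realType.

(* nat-indexed view of z in R^d with conventions z_0 = 1, z_{d+1} = 0
   (and, harmlessly, 0 beyond); zext z j = z_j for j in [d]. *)
Definition zext (d : nat) (z : 'I_d -> R) (j : nat) : R :=
  if j == 0%N then 1 else oapp z 0 (insub j.-1 : option 'I_d).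

Definition Tmap (d : nat) (z : 'I_d -> R) : 'I_d.+1 -> R :=
  fun j => zext z j - zext z j.+1.

Definition Pmap (d : nat) (s : {perm 'I_d.+1}) (lam : 'I_d.+1 -> R) : 'I_d.+1 -> R :=
  fun j => \sum_(k < d.+1) (if j == s k then 1 else 0) * lam k.

Definition Tinv (d : nat) (lam : 'I_d.+1 -> R) : 'I_d -> R :=
  fun j => \sum_(k < d.+1 | (j.+1 <= k)%N) lam k.

Definition Lsig (d : nat) (s : {perm 'I_d.+1}) (z : 'I_d -> R) : 'I_d -> R :=
  Tinv (Pmap s (Tmap z)).

(* z in Delta^d : 1 >= z_1 >= ... >= z_d >= 0 *)
Definition in_Delta (d : nat) (z : 'I_d -> R) : Prop :=
  forall j : nat, (j <= d)%N -> zext z j.+1 <= zext z j.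

Definition in_B (d : nat) (p : 'I_d.+1 -> R) (x : R) (z : 'I_d -> R) : Prop :=
  x = p ord0 + \sum_(j < d) (p (inord j.+1) - p (inord j)) * z j /\ in_Delta z.

Variable n : nat.
Variable d : 'I_n -> nat.

(* staircases: sequences of pairs (pi_t(1), pi_t(2)) *)
Definition is_staircase (pi : seq ('I_n * nat)) : Prop :=
  (forall i : 'I_n, count (fun q => q.1 == i) pi = d i) /\
  (forall t : 'I_(size pi),
      (tnth (in_tuple pi) t).2 =
      count (fun q => q.1 == (tnth (in_tuple pi) t).1) (take t.+1 pi)).

Definition jrep (pi : seq ('I_n * nat)) (t : nat) : 'I_n -> nat :=
  fun i => count (fun q => q.1 == i) (take t pi).

Variable p : forall i : 'I_n, 'I_(d i).+1 -> R.
Variable f : 'I_n -> R -> R.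
Variable phi : ('I_n -> R) -> R.
Variable sigma : forall i : 'I_n, {perm 'I_(d i).+1}.

(* psi^sigma(j) = phi(f_1(p_{1,sigma_1(j_1)}), ..., f_n(p_{n,sigma_n(j_n)})),
   for j in G (nat coordinates j_i <= d_i, read as elements of 'I_(d_i).+1) *)
Definition psi (j : 'I_n -> nat) : R :=
  phi (fun i => f i (@p i (@sigma i (inord (j i))))).

Definition stair_rhs (pi : seq ('I_n * nat)) (z' : forall i : 'I_n, 'I_(d i) -> R) : R :=
  psi (jrep pi 0) +
  \sum_(t < size pi)
     (psi (jrep pi t.+1) - psi (jrep pi t)) *
       zext (z' (tnth (in_tuple pi) t).1) (tnth (in_tuple pi) t).2.

Definition LPrelax (x : 'I_n -> R) (z : forall i : 'I_n, 'I_(d i) -> R) (mu : R) : Prop :=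
  (forall i, in_B (@p i) (x i) (z i)) /\
  exists z' : forall i : 'I_n, 'I_(d i) -> R,
    (* z' = (L^sigma)^{-1}(z), i.e. L^sigma(z') = z *)
    (forall i k, Lsig (@sigma i) (z' i) k = z i k) /\
    (forall pi, is_staircase pi -> mu <= stair_rhs pi z').

Definition binaryz (z : forall i : 'I_n, 'I_(d i) -> R) : Prop :=
  forall i k, z i k = 0 \/ z i k = 1.

Definition Eset x z mu : Prop := LPrelax x z mu /\ binaryz z.

Definition hypograph (x : 'I_n -> R) (mu : R) : Prop :=
  (forall i, exists j : 'I_(d i).+1, x i = @p i j) /\ mu <= phi (fun i => f i (x i)).

Definition is_vertex_LP x z mu : Prop :=
  LPrelax x z mu /\
  forall x1 z1 mu1 x2 z2 mu2 (t : R),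
    LPrelax x1 z1 mu1 -> LPrelax x2 z2 mu2 -> 0 < t < 1 ->
    (forall i, x i = t * x1 i + (1 - t) * x2 i) ->
    (forall i k, z i k = t * z1 i k + (1 - t) * z2 i k) ->
    mu = t * mu1 + (1 - t) * mu2 ->
    (forall i, x1 i = x2 i) /\ (forall i k, z1 i k = z2 i k) /\ mu1 = mu2.

Definition ideal_MIP_formulation_of_hypograph : Prop :=
  (forall x mu, hypograph x mu <-> exists z, Eset x z mu) /\
  (forall x z mu, is_vertex_LP x z mu -> binaryz z).

End Defs.

Definition in_box (R : realType) (n : nat) (L U : 'I_n -> R) (a : 'I_n -> R) : Prop :=
  forall i, L i <= a i <= U i.

Definition supermodular_on_box (R : realType) (n : nat) (L U : 'I_n -> R)
  (phi : ('I_n -> R) -> R) : Prop :=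
  forall a b, in_box L U a -> in_box L U b ->
    phi a + phi b <= phi (fun i => Num.max (a i) (b i)) + phi (fun i => Num.min (a i) (b i)).

(* In the coordinates z' = (L^sigma)^{-1}(z), membership in B_i says that z'_i
   lies in the monotone simplex, and the right-hand side of the inequality of a
   staircase pi is psi(0) plus the sum of the increments of psi along the lattice
   path of pi, each weighted by the coordinate of z' that the step advances.
   Since each f_i o p_i o sigma_i is nondecreasing, psi inherits supermodularity
   from phi, so exchanging two consecutive steps in favour of the larger weight
   can only lower this sum: the staircase that advances coordinates in decreasing
   order of z' is binding.  At a binary point z' is the indicator of a grid point
   K, and the binding right-hand side is psi(K) = phi(f(x)); this gives the
   formulation.  If some coordinate of z' takes a fractional value c, moving every
   entry equal to c up, resp. down, by a small gap keeps the greedy order, along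
   which the binding right-hand side is linear in z'; so the point is the midpoint
   of two distinct points of the LP relaxation and is not a vertex. *)

From HB Require Import structures.
From mathcomp Require Import all_boot all_order all_algebra.
From mathcomp Require Import fingroup perm.
From mathcomp Require Import reals.
From mathcomp Require Import zify ring lra.
From Stdlib Require Import FunctionalExtensionality Classical.
Import Order.TTheory GRing.Theory Num.Theory.
Local Open Scope ring_scope.
Set Implicit Arguments. Unset Strict Implicit. Unset Printing Implicit Defensive.

Section MonotoneSimplex.
Variables (R : realType) (d : nat).
Implicit Types (z w a b : 'I_d -> R) (lam : 'I_d.+1 -> R).

Lemma zextS z (j : 'I_d) : zext z j.+1 = z j.
Proof. by rewrite /zext /= valK. Qed.

Lemma zext_out z j : (d < j)%N -> zext z j = 0.
Proof. by case: j => // j lt_dj; rewrite /zext /= insubF // ltnNge -ltnS lt_dj. Qed.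

Lemma zext_comp (h : R -> R) z j : h 0 = 0 -> h 1 = 1 ->
  zext (h \o z) j = h (zext z j).
Proof. by move=> h0 h1; case: j => [|j] //; rewrite /zext /=; case: insubP. Qed.

Lemma zext_comb t a b j :
  zext (fun k => t * a k + (1 - t) * b k) j = t * zext a j + (1 - t) * zext b j.
Proof. by case: j => [|j]; rewrite /zext /=; [|case: insubP => [k _ _|_] /=]; ring. Qed.

Definition prefix_ones (k : nat) : 'I_d -> R := fun j => (j < k)%N%:R.

Lemma zext_prefix_ones k j : (k <= d)%N -> zext (prefix_ones k) j = (j <= k)%N%:R.
Proof.
move=> le_kd; case: j => [|j] //; rewrite /zext /=; case: insubP => [u _ <-|] //=.
by rewrite -leqNgt => le_dj; rewrite ltnNge (leq_trans le_kd le_dj).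
Qed.

Lemma prefix_ones_binary k j : prefix_ones k j = 0 \/ prefix_ones k j = 1.
Proof. by rewrite /prefix_ones; case: (_ < _)%N; [right | left]. Qed.

Definition Bx (p : 'I_d.+1 -> R) z : R :=
  p ord0 + \sum_(j < d) (p (inord j.+1) - p (inord j)) * z j.

Lemma Bx_comb p t a b :
  Bx p (fun k => t * a k + (1 - t) * b k) = t * Bx p a + (1 - t) * Bx p b.
Proof.
rewrite /Bx; have -> :
    \sum_(j < d) (p (inord j.+1) - p (inord j)) * (t * a j + (1 - t) * b j) =
    t * \sum_(j < d) (p (inord j.+1) - p (inord j)) * a j +
    (1 - t) * \sum_(j < d) (p (inord j.+1) - p (inord j)) * b j.
  by rewrite !mulr_sumr -big_split; apply: eq_bigr => j _ /=; ring.
ring.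
Qed.

Lemma Bx_prefix_ones (p : 'I_d.+1 -> R) (k : 'I_d.+1) : Bx p (prefix_ones k) = p k.
Proof.
rewrite /Bx (eq_bigr (fun j : 'I_d => if (j < k)%N then p (inord j.+1) - p (inord j) else 0));
  last by move=> j _; rewrite /prefix_ones; case: ifP; rewrite ?mulr1 ?mulr0.
rewrite -big_mkcond /= -(big_ord_widen d (fun j => p (inord j.+1) - p (inord j)));
  last by rewrite -ltnS.
rewrite -(big_mkord xpredT (fun j => p (inord j.+1) - p (inord j))) telescope_sumr //.
rewrite inord_val (_ : inord 0 = ord0) 1?addrC ?subrK //.
by apply: val_inj; rewrite /= inordK.
Qed.

Lemma Tmap_prefix_ones (k : 'I_d.+1) : Tmap (prefix_ones k) = fun j => (j == k)%:R.
Proof.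
apply: functional_extensionality => j; have le_kd : (k <= d)%N by rewrite -ltnS.
rewrite /Tmap !zext_prefix_ones // -val_eqE /= eqn_leq.
by case: ltngtP; rewrite ?subrr ?subr0.
Qed.

Lemma Pmap_perm (s : {perm 'I_d.+1}) lam j : Pmap s lam j = lam ((s^-1)%g j).
Proof.
rewrite /Pmap (bigD1 ((s^-1)%g j)) //= permKV eqxx mul1r big1 ?addr0 // => k ne_k.
by rewrite ifN ?mul0r //; apply: contra ne_k => /eqP ->; rewrite permK.
Qed.

Lemma PmapK (s : {perm 'I_d.+1}) lam : Pmap (s^-1)%g (Pmap s lam) = lam.
Proof. by apply: functional_extensionality => j; rewrite !Pmap_perm invgK permK. Qed.

Lemma sum_Pmap (s : {perm 'I_d.+1}) lam : \sum_j Pmap s lam j = \sum_j lam j.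
Proof.
under eq_bigr do rewrite Pmap_perm.
by rewrite [RHS](reindex_inj (@perm_inj _ (s^-1)%g)).
Qed.

Lemma sum_Tmap z : \sum_(j < d.+1) Tmap z j = 1.
Proof.
rewrite /Tmap -(big_mkord xpredT (fun j => zext z j - zext z j.+1)).
under eq_bigr do rewrite -opprB.
by rewrite sumrN telescope_sumr // zext_out // opprB subr0.
Qed.

(* Here the convention [z_0 = 1] of [zext] is matched by [sum lam = 1]. *)
Lemma zext_Tinv lam : \sum_j lam j = 1 -> forall j, (j <= d.+1)%N ->
  zext (Tinv lam) j = \sum_(k < d.+1 | (j <= k)%N) lam k.
Proof.
move=> sum1 [|j] le_jd; first by rewrite /zext /= -sum1; apply: eq_bigl.
have [lt_jd|le_dj] := ltnP j d; first by rewrite (zextS _ (Ordinal lt_jd)).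
rewrite zext_out // big_pred0 // => k.
by apply/negbTE; rewrite -ltnNge (leq_trans (ltn_ord k)).
Qed.

Lemma TinvK lam : \sum_j lam j = 1 -> Tmap (Tinv lam) = lam.
Proof.
move=> sum1; apply: functional_extensionality => j.
rewrite /Tmap !zext_Tinv // 1?ltnW // (bigD1 j) //=.
by rewrite (eq_bigl (fun k : 'I_d.+1 => (j < k)%N)) ?addrK // => k;
  rewrite ltn_neqAle andbC eq_sym.
Qed.

Lemma TmapK z : Tinv (Tmap z) = z.
Proof.
apply: functional_extensionality => j; rewrite /Tinv /Tmap.
rewrite (eq_bigl (fun k : 'I_d.+1 => xpredT k && (j.+1 <= k)%N)) //.
rewrite -(big_geq_mkord j.+1 d.+1 xpredT (fun k => zext z k - zext z k.+1)).
under eq_bigr do rewrite -opprB.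
by rewrite sumrN (telescope_sumr _ (leqW (ltn_ord j))) zextS zext_out // opprB subr0.
Qed.

Lemma LsigK (s : {perm 'I_d.+1}) : cancel (@Lsig R d s) (Lsig (s^-1)%g).
Proof. by move=> z; rewrite /Lsig TinvK ?sum_Pmap ?sum_Tmap // PmapK TmapK. Qed.

Lemma LsigKV (s : {perm 'I_d.+1}) : cancel (Lsig (s^-1)%g) (@Lsig R d s).
Proof. by move=> z; have := LsigK (s^-1)%g z; rewrite invgK. Qed.

Lemma Lsig_prefix_ones (s : {perm 'I_d.+1}) (k : 'I_d.+1) :
  Lsig s (prefix_ones k) = prefix_ones (s k).
Proof.
rewrite /Lsig Tmap_prefix_ones.
have -> : Pmap s (fun j => (j == k)%:R) = (fun j => (j == s k)%:R :> R).
  by apply: functional_extensionality => j; rewrite Pmap_perm -(inj_eq (@perm_inj _ s)) permKV.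
apply: functional_extensionality => j; rewrite /Tinv /prefix_ones.
have [lt_jsk|le_skj] := ltnP j (s k).
  by rewrite (bigD1 (s k)) //= eqxx big1 ?addr0 // => i /andP [_ /negbTE ->].
by rewrite big1 // => i; case: eqP => [->|//]; rewrite ltnNge le_skj.
Qed.

Lemma Lsig_comb (s : {perm 'I_d.+1}) t a b j :
  Lsig s (fun k => t * a k + (1 - t) * b k) j = t * Lsig s a j + (1 - t) * Lsig s b j.
Proof.
rewrite /Lsig /Tinv !mulr_sumr -big_split /=; apply: eq_bigr => k _.
by rewrite !Pmap_perm /Tmap !zext_comb; ring.
Qed.

Lemma Delta_zext_le z : in_Delta z -> forall i j, (i <= j)%N -> zext z j <= zext z i.
Proof.
move=> Dz i; elim=> [|j IH]; first by rewrite leqn0 => /eqP ->.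
rewrite leq_eqVlt => /orP [/eqP -> //|lt_ij]; apply: le_trans (IH lt_ij).
by have [le_jd|lt_dj] := leqP j d; [exact: Dz | rewrite !zext_out // ltnW].
Qed.

Lemma Delta_zext_bounds z : in_Delta z -> forall j, 0 <= zext z j <= 1.
Proof.
move=> Dz j; rewrite (Delta_zext_le Dz (leq0n j)) andbT.
have [le_jd|lt_dj] := leqP j d.+1; last by rewrite zext_out // ltnW.
by rewrite -(zext_out z (ltnSn d)) Delta_zext_le.
Qed.

Lemma Delta_prefix_ones k : (k <= d)%N -> in_Delta (prefix_ones k).
Proof.
move=> le_kd j le_jd; rewrite !zext_prefix_ones // ler_nat.
by case: (ltnP j k) => [/ltnW ->|].
Qed.

Lemma Lsig_Delta (s : {perm 'I_d.+1}) z : in_Delta z -> in_Delta (Lsig s z).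
Proof.
move=> Dz j le_jd; rewrite /Lsig; set lam := Pmap s (Tmap z).
have sum1 : \sum_j lam j = 1 by rewrite sum_Pmap sum_Tmap.
pose jo : 'I_d.+1 := Ordinal (le_jd : (j < d.+1)%N).
rewrite !zext_Tinv // 1?leqW // [leRHS](bigD1 jo) //=.
rewrite [X in _ <= _ + X](eq_bigl (fun k : 'I_d.+1 => (j < k)%N)) ?lerDr.
  by rewrite /lam Pmap_perm /Tmap subr_ge0 Dz // -ltnS.
by move=> k; rewrite ltn_neqAle andbC eq_sym.
Qed.

Lemma Delta_binary z : in_Delta z -> (forall j, z j = 0 \/ z j = 1) ->
  exists k : 'I_d.+1, z = prefix_ones k.
Proof.
move=> Dz z01; pose k := find (fun j => zext z j.+1 == 0) (iota 0 d).
have le_kd : (k <= d)%N by rewrite -[X in (_ <= X)%N](size_iota 0 d) find_size.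
exists (Ordinal (le_kd : (k < d.+1)%N)); apply: functional_extensionality => j.
rewrite /prefix_ones /=; have [lt_jk|le_kj] := ltnP j k.
  have := before_find 0 lt_jk; rewrite nth_iota ?(leq_trans lt_jk) // add0n zextS.
  by case: (z01 j) => ->; rewrite ?eqxx.
have lt_kd : (k < d)%N := leq_ltn_trans le_kj (ltn_ord j).
have /(nth_find 0) : has (fun j => zext z j.+1 == 0) (iota 0 d).
  by rewrite has_find size_iota.
rewrite -/k nth_iota // add0n => /eqP zk0.
apply/eqP; rewrite -(zextS z j) eq_le -[X in _ <= X]zk0 Delta_zext_le ?ltnS //=.
by case/andP: (Delta_zext_bounds Dz j.+1).
Qed.

End MonotoneSimplex.

Arguments prefix_ones {R d}.

Section PathSums.
Variables (R : realType) (n : nat) (d : 'I_n -> nat) (g : ('I_n -> nat) -> R).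
Implicit Types (w : forall i : 'I_n, 'I_(d i) -> R) (J K : 'I_n -> nat) (s : seq 'I_n).

Definition incr J (a : 'I_n) : 'I_n -> nat := fun i => (J i + (i == a))%N.

Fixpoint path_sum w J s : R :=
  if s is a :: s' then
    (g (incr J a) - g J) * zext (w a) (J a).+1 + path_sum w (incr J a) s'
  else 0.

Fixpoint greedy_path w J s : Prop :=
  if s is a :: s' then
    (forall b, b \in s -> zext (w b) (J b).+1 <= zext (w a) (J a).+1) /\
    greedy_path w (incr J a) s'
  else True.

Definition fits J s := forall i, (J i + count_mem i s <= d i)%N.

Definition grid_supermodular := forall J K,
  (forall i, J i <= d i)%N -> (forall i, K i <= d i)%N ->
  g J + g K <= g (fun i => maxn (J i) (K i)) + g (fun i => minn (J i) (K i)).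

Definition all_Delta w := forall i, in_Delta (w i).

Lemma g_ext J K : J =1 K -> g J = g K.
Proof. by move/functional_extensionality ->. Qed.

Lemma incrC J a b : incr (incr J a) b = incr (incr J b) a.
Proof.
by apply: functional_extensionality => i; rewrite /incr -!addnA [((i == b) + _)%N]addnC.
Qed.

Lemma grid_supermodular_incr J a b : grid_supermodular -> a != b ->
  (J a < d a)%N -> (J b < d b)%N -> (forall i, J i <= d i)%N ->
  g (incr J a) + g (incr J b) <= g (incr (incr J a) b) + g J.
Proof.
move=> gsm neq_ab lt_a lt_b le_J.
have bnd c : (J c < d c)%N -> forall i, (incr J c i <= d i)%N.
  by move=> lt_c i; rewrite /incr; case: eqP => [->|_]; have := le_J i; lia.
have ab_excl i : ((i == a) && (i == b)) = false.
  by case: eqP => // ->; rewrite (negbTE neq_ab).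
have := gsm _ _ (bnd a lt_a) (bnd b lt_b).
rewrite (g_ext (J := fun i => maxn _ _) (K := incr (incr J a) b)) => [|i].
  rewrite (g_ext (J := fun i => minn _ _) (K := J)) // => i.
  by rewrite /incr; move: (ab_excl i); case: (i == a); case: (i == b) => //= _; lia.
by rewrite /incr; move: (ab_excl i); case: (i == a); case: (i == b) => //= _; lia.
Qed.

Lemma path_sum_swap w J a b s : grid_supermodular -> a != b ->
  (J a < d a)%N -> (J b < d b)%N -> (forall i, J i <= d i)%N ->
  zext (w b) (J b).+1 <= zext (w a) (J a).+1 ->
  path_sum w J [:: a, b & s] <= path_sum w J [:: b, a & s].
Proof.
move=> gsm neq_ab lt_a lt_b le_J le_w /=.
have -> : incr J a b = J b by rewrite /incr eq_sym (negbTE neq_ab) addn0.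
have -> : incr J b a = J a by rewrite /incr (negbTE neq_ab) addn0.
rewrite [incr (incr J b) a]incrC !addrA lerD2r.
have gD := grid_supermodular_incr gsm neq_ab lt_a lt_b le_J.
have : 0 <= (zext (w a) (J a).+1 - zext (w b) (J b).+1) *
  (g (incr (incr J a) b) + g J - (g (incr J a) + g (incr J b))).
  by apply: mulr_ge0; rewrite subr_ge0.
nra.
Qed.

(* Moving [a] to the front past coordinates of no larger weight is a sequence
   of favourable swaps. *)
Lemma path_sum_bubble w : grid_supermodular -> all_Delta w ->
  forall u J a v, a \notin u ->
  (forall b, b \in u -> zext (w b) (J b).+1 <= zext (w a) (J a).+1) ->
  fits J (u ++ a :: v) -> path_sum w J (a :: u ++ v) <= path_sum w J (u ++ a :: v).
Proof.
move=> gsm Dw; elim=> [//|b u IH] J a v.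
rewrite in_cons negb_or => /andP [neq_ab a_u] le_w fit.
have le_J i : (J i <= d i)%N by have := fit i; lia.
have lt_a : (J a < d a)%N by have := fit a; rewrite count_cat /= eqxx; lia.
have lt_b : (J b < d b)%N by have := fit b; rewrite /= eqxx; lia.
apply: le_trans (path_sum_swap _ gsm neq_ab lt_a lt_b le_J (le_w b (mem_head _ _))) _.
rewrite /= lerD2l; apply: IH => // [c c_u|i].
  rewrite {2}/incr (negbTE neq_ab) addn0; apply: le_trans (le_w c _); last first.
    by rewrite in_cons c_u orbT.
  by apply: Delta_zext_le; [exact: Dw | rewrite /incr; lia].
by have := fit i; rewrite /incr /= eq_sym; lia.
Qed.

Lemma greedy_path_sum_min w : grid_supermodular -> all_Delta w ->
  forall s J s', greedy_path w J s -> perm_eq s s' -> fits J s ->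
  path_sum w J s <= path_sum w J s'.
Proof.
move=> gsm Dw; elim=> [|a s IH] J s' gp perm_ss' fit.
  by move: perm_ss'; rewrite perm_sym => /perm_nilP ->.
have a_s' : a \in s' by rewrite -(perm_mem perm_ss') mem_head.
set u := take (index a s') s'; set v := drop (index a s').+1 s'.
have def_s' : s' = u ++ a :: v.
  by rewrite /u /v -{2}(nth_index a a_s') -drop_nth ?index_mem // cat_take_drop.
have a_u : a \notin u by rewrite in_take // ltnn.
have fit' : fits J (u ++ a :: v) by move=> i; rewrite -def_s' -(seq.permP perm_ss').
rewrite def_s'; apply: le_trans (path_sum_bubble gsm Dw a_u _ fit'); last first.
  by move=> b b_u; apply: gp.1; rewrite (perm_mem perm_ss') def_s' mem_cat b_u.
rewrite /= lerD2l; apply: IH => [|| i]; first exact: gp.2.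
  by rewrite -(perm_cons a) (perm_trans perm_ss') // def_s' (perm_catCA u [:: a]).
by have := fit i; rewrite /incr /= eq_sym; lia.
Qed.

Lemma exists_greedy_path w J (r : 'I_n -> nat) :
  exists s, (forall i, count_mem i s = r i) /\ greedy_path w J s.
Proof.
move: {2}(\sum_i r i)%N (erefl (\sum_i r i)%N) => m.
elim: m J r => [|m IH] J r sum_r.
  by exists [::]; split => // i /=; move: sum_r; rewrite (bigD1 i) //=; lia.
have [a r_a|r0] := pickP (fun i => 0 < r i)%N; last first.
  move: sum_r; rewrite big1 // => i _.
  by move/negbT: (r0 i); rewrite -leqNgt leqn0 => /eqP.
have [b /= r_b b_max] :=
  @arg_maxP _ _ _ a [pred i | 0 < r i]%N (fun i => zext (w i) (J i).+1) r_a.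
pose r' i := (r i - (i == b))%N.
have sum_r' : (\sum_i r' i)%N = m.
  rewrite (bigD1 b) //= (eq_bigr r) => [|i /negbTE ne_ib]; last by rewrite /r' ne_ib subn0.
  by move: sum_r; rewrite (bigD1 b) //= /r' eqxx; lia.
have [s [cnt_s gp]] := IH (incr J b) r' sum_r'.
exists (b :: s); split => [i|]; first by rewrite /= cnt_s /r' eq_sym; case: eqP => [->|_]; lia.
split => // c; rewrite in_cons => /orP [/eqP -> //|c_s]; apply: b_max.
have : (0 < count_mem c s)%N by rewrite -has_count has_pred1.
by rewrite cnt_s /r' /=; lia.
Qed.

Lemma path_sum_beyond w K s J : (forall i k, zext (w i) k = (k <= K i)%N%:R) ->
  (forall b, b \in s -> K b <= J b)%N -> path_sum w J s = 0.
Proof.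
move=> zext_w; elim: s J => [//|a s IH] J le_KJ /=.
rewrite zext_w leqNgt ltnS (le_KJ a (mem_head _ _)) mulr0 add0r IH // => b b_s.
by have := le_KJ b; rewrite in_cons b_s orbT /incr => /(_ isT); lia.
Qed.

Lemma greedy_path_sum_indicator w K s J :
  (forall i k, zext (w i) k = (k <= K i)%N%:R) -> (forall i, K i <= d i)%N ->
  greedy_path w J s -> (forall i, J i + count_mem i s = d i)%N ->
  (forall i, J i <= K i)%N -> path_sum w J s = g K - g J.
Proof.
move=> zext_w le_Kd; elim: s J => [|a s IH] J gp cnt le_JK.
  by rewrite (g_ext (J := K) (K := J)) ?subrr // => i; have := cnt i; have := le_Kd i;
    have := le_JK i; rewrite /=; lia.
have [lt_Ja|le_Ka] := ltnP (J a) (K a).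
  rewrite /= zext_w lt_Ja mulr1 (IH (incr J a)).
  - by rewrite addrC addrA subrK.
  - exact: gp.2.
  - by move=> i; have := cnt i; rewrite /incr /= eq_sym; lia.
  - by move=> i; rewrite /incr; case: eqP => [->|_]; have := le_JK i; lia.
have le_KJ b : b \in a :: s -> (K b <= J b)%N.
  move/(gp.1 b); rewrite !zext_w [(_ < K a)%N]ltnNge le_Ka.
  by case: ltnP => // _; rewrite ler10.
rewrite (path_sum_beyond zext_w) // (g_ext (J := K) (K := J)) ?subrr // => i.
have [i_s|i_s] := boolP (i \in a :: s); first by have := le_KJ i i_s; have := le_JK i; lia.
by have := cnt i; move/count_memPn: i_s => ->; have := le_Kd i; have := le_JK i; lia.
Qed.

Lemma greedy_path_homo w w' J s :
  (forall i k i' k', zext (w i) k <= zext (w i') k' -> zext (w' i) k <= zext (w' i') k') ->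
  greedy_path w J s -> greedy_path w' J s.
Proof.
move=> homo_w; elim: s J => [//|a s IH] J /= [le_w gp].
by split=> [b /le_w /homo_w //|]; exact: IH.
Qed.

Lemma path_sum_midpoint w w1 w2 :
  (forall i k, zext (w1 i) k + zext (w2 i) k = 2 * zext (w i) k) ->
  forall s J, path_sum w1 J s + path_sum w2 J s = 2 * path_sum w J s.
Proof.
move=> mid; elim=> [|a s IH] J /=; first by rewrite addr0 mulr0.
by rewrite mulrDr -IH mulrCA -mid; ring.
Qed.

End PathSums.

Section Staircases.
Variables (R : realType) (n : nat) (d : 'I_n -> nat).

Definition full_path (s : seq 'I_n) := forall i, count_mem i s = d i.

Lemma staircase_perm_eq s pi : full_path s -> is_staircase d pi -> perm_eq s (map fst pi).
Proof.
move=> cnt [cnt_pi _]; apply/allP => i _; apply/eqP.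
by rewrite cnt -(cnt_pi i) count_map; apply: eq_count.
Qed.

Lemma count_take_fst (pi : seq ('I_n * nat)) k i :
  count (fun q : 'I_n * nat => q.1 == i) (take k pi) = count_mem i (take k (map fst pi)).
Proof. by rewrite -map_take count_map; apply: eq_count. Qed.

Lemma exists_staircase s : full_path s -> exists2 pi, is_staircase d pi & map fst pi = s.
Proof.
case E: s => [|a0 s'] cnt; first by exists [::] => //; split => [i|[]] //; rewrite -cnt.
rewrite -{}E in cnt *.
pose pi := [seq (nth a0 s t, count_mem (nth a0 s t) (take t.+1 s)) | t <- iota 0 (size s)].
have fst_pi : map fst pi = s by rewrite -map_comp; exact: mkseq_nth.
exists pi => //; split=> [i|t].
  by rewrite -cnt -fst_pi [RHS]count_map; apply: eq_count.
have lt_ts : (t < size s)%N by rewrite -fst_pi size_map.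
by rewrite (tnth_nth (a0, 0%N)) /= count_take_fst fst_pi (nth_map 0%N) ?size_iota ?nth_iota.
Qed.

Lemma path_sum_nth (g : ('I_n -> nat) -> R) (w : forall i : 'I_n, 'I_(d i) -> R) a0 s J :
  \sum_(t < size s)
     (g (fun i => J i + count_mem i (take t.+1 s))%N - g (fun i => J i + count_mem i (take t s))%N)
     * zext (w (nth a0 s t)) (J (nth a0 s t) + count_mem (nth a0 s t) (take t s)).+1
  = path_sum g w J s.
Proof.
elim: s J => [|a s IH] J; first by rewrite big_ord0.
have incrE i u : (J i + ((a == i) + u) = incr J a i + u)%N.
  by rewrite /incr eq_sym addnA.
rewrite big_ord_recl /= -IH take0 addn0; congr (_ * _ + _).
  by congr (_ - _); apply: g_ext => i; rewrite ?take0 /= ?addn0 // /incr eq_sym.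
apply: eq_bigr => t _; rewrite /bump /= add0n add1n incrE.
by congr ((_ - _) * _); apply: g_ext => i; rewrite incrE.
Qed.

Lemma stair_rhs_path_sum (p : forall i : 'I_n, 'I_(d i).+1 -> R) (f : 'I_n -> R -> R)
    (phi : ('I_n -> R) -> R) (sigma : forall i : 'I_n, {perm 'I_(d i).+1})
    (w : forall i : 'I_n, 'I_(d i) -> R) pi :
  is_staircase d pi ->
  stair_rhs p f phi sigma pi w =
  psi p f phi sigma (fun _ => 0%N) + path_sum (psi p f phi sigma) w (fun _ => 0%N) (map fst pi).
Proof.
have jrepE t : jrep pi t = fun i => (0 + count_mem i (take t (map fst pi)))%N.
  by apply: functional_extensionality => i; rewrite /jrep count_take_fst.
case E: pi => [|[a0 k0] pi'] stair.
  by rewrite /stair_rhs big_ord0 !addr0; congr psi; apply: functional_extensionality.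
rewrite -{}E in stair jrepE *; case: stair => _ snd.
rewrite /stair_rhs -(path_sum_nth _ _ a0) size_map jrepE take0; congr (_ + _).
apply: eq_bigr => t _.
have t_pi : (t < size (map fst pi))%N by rewrite size_map.
rewrite snd (tnth_nth (a0, 0%N)) /= -(nth_map (a0, 0%N) a0 fst) // count_take_fst.
set x := nth a0 (map fst pi) t.
have -> : count_mem x (take t.+1 (map fst pi)) = (count_mem x (take t (map fst pi))).+1.
  by rewrite (take_nth a0 t_pi) -cats1 count_cat /= eqxx addn1.
by rewrite !jrepE add0n.
Qed.

End Staircases.

Section Nudge.
Variable R : realType.
Implicit Types (c e gap u v : R).

Definition nudge c e u : R := if u == c then u + e else u.

Lemma nudge_homo c e gap u v : `|e| <= gap ->
  (u != c -> gap < `|u - c|) -> (v != c -> gap < `|v - c|) ->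
  u <= v -> nudge c e u <= nudge c e v.
Proof.
rewrite /nudge => le_e gap_u gap_v le_uv.
have e_le : e <= `|e| := ler_norm e.
have Ne_le : - e <= `|e| by rewrite -normrN ler_norm.
case: eqVneq => [eq_uc|ne_uc]; case: eqVneq => [eq_vc|ne_vc] //.
- by rewrite eq_uc eq_vc.
- by have := gap_v ne_vc; rewrite ger0_norm ?subr_ge0 -?eq_uc //; lra.
- by have := gap_u ne_uc; rewrite ler0_norm ?subr_le0 -?eq_vc //; lra.
Qed.

Lemma nudge_midpoint c e u : nudge c e u + nudge c (- e) u = 2 * u.
Proof. by rewrite /nudge; case: eqP => _; ring. Qed.

Lemma exists_gap (T : finType) (v : T -> R) c :
  exists2 gap, 0 < gap & forall t, v t != c -> gap < `|v t - c|.
Proof.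
pose m := \big[Order.min/1]_t (if v t == c then 1 else `|v t - c|).
have m_gt0 : 0 < m.
  rewrite /m; elim/big_ind: _ => // [a b|t _]; first by rewrite lt_min => -> ->.
  by case: eqVneq => // ne_vc; rewrite normr_gt0 subr_eq0.
exists (m / 2) => [|t ne_vc]; first by rewrite divr_gt0.
have : m <= if v t == c then 1 else `|v t - c| by exact: bigmin_le.
by rewrite (negbTE ne_vc); lra.
Qed.

Section Weights.
Variables (n : nat) (d : 'I_n -> nat).
Implicit Types (w : forall i : 'I_n, 'I_(d i) -> R).

Definition isolated w c gap := forall i k, zext (w i) k != c -> gap < `|zext (w i) k - c|.

Lemma exists_isolated w c : exists2 gap, 0 < gap & isolated w c gap.
Proof.
have [gap gap_gt0 gapP] :=
  exists_gap (fun t : {i : 'I_n & 'I_(d i).+2} => zext (w (tag t)) (tagged t)) c.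
exists gap => // i k; wlog le_kd : k / (k <= (d i).+1)%N => [wlog_k|].
  have [/wlog_k//|lt_dk] := leqP k (d i).+1.
  by rewrite (zext_out _ (ltnW lt_dk)) -(zext_out (w i) (ltnSn (d i))); apply: wlog_k.
exact: (gapP (Tagged (fun i => 'I_(d i).+2) (Ordinal (le_kd : (k < (d i).+2)%N)))).
Qed.

Definition nudged c e w : forall i, 'I_(d i) -> R := fun i j => nudge c e (w i j).
Arguments nudged c e w i : clear implicits.

Lemma zext_nudged w c e i k : 0 < c < 1 ->
  zext (nudged c e w i) k = nudge c e (zext (w i) k).
Proof.
case/andP=> c_gt0 c_lt1; apply: (zext_comp (h := nudge c e)).
  by rewrite /nudge ifN // lt_eqF.
by rewrite /nudge ifN // gt_eqF.
Qed.

Lemma nudged_homo w c gap e : 0 < c < 1 -> `|e| <= gap -> isolated w c gap ->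
  forall i k i' k', zext (w i) k <= zext (w i') k' ->
  zext (nudged c e w i) k <= zext (nudged c e w i') k'.
Proof.
move=> c01 le_e iso i k i' k' le_w; rewrite !zext_nudged //.
exact: nudge_homo le_e (iso i k) (iso i' k') le_w.
Qed.

Lemma nudged_Delta w c gap e : 0 < c < 1 -> `|e| <= gap -> isolated w c gap ->
  all_Delta w -> all_Delta (nudged c e w).
Proof. by move=> c01 le_e iso Dw i j le_jd; apply: (nudged_homo c01 le_e iso); apply: Dw. Qed.

Lemma nudged_midpoint w c e i j :
  w i j = 1 / 2 * nudged c e w i j + (1 - 1 / 2) * nudged c (- e) w i j.
Proof. by have := nudge_midpoint c e (w i j); rewrite /nudged; lra. Qed.

End Weights.

End Nudge.

Section Formulation.
Variables (R : realType) (n : nat) (d : 'I_n -> nat).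
Variables (p : forall i : 'I_n, 'I_(d i).+1 -> R) (f : 'I_n -> R -> R).
Variables (phi : ('I_n -> R) -> R) (sigma : forall i : 'I_n, {perm 'I_(d i).+1}).
Hypothesis psi_sm : grid_supermodular d (psi p f phi sigma).

Local Notation psi := (psi p f phi sigma).
Local Notation stair_rhs := (stair_rhs p f phi sigma).
Local Notation LPrelax := (LPrelax p f phi sigma).
Local Notation full_path := (full_path d).
Local Notation J0 := (fun _ : 'I_n => 0%N).
Implicit Types (w z : forall i : 'I_n, 'I_(d i) -> R) (s : seq 'I_n).

Lemma psi_grid_supermodular (L U : 'I_n -> R) : supermodular_on_box L U phi ->
  (forall i (j : 'I_(d i).+1), L i <= f i (@p i j) <= U i) ->
  (forall i (j k : 'I_(d i).+1), (j <= k)%N ->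
     f i (@p i (sigma i j)) <= f i (@p i (sigma i k))) ->
  grid_supermodular d psi.
Proof.
move=> phi_sm f_box f_mono J K le_J le_K.
pose v i (k : nat) := f i (@p i (sigma i (inord k))).
have v_mono i a b : (a <= b)%N -> (b <= d i)%N -> v i a <= v i b.
  by move=> le_ab le_b; apply: f_mono; rewrite !inordK // ltnS // (leq_trans le_ab).
have vmax i : Num.max (v i (J i)) (v i (K i)) = v i (maxn (J i) (K i)).
  by case: (leqP (J i) (K i)) => h; [rewrite max_r // v_mono | rewrite max_l // v_mono // ltnW].
have vmin i : Num.min (v i (J i)) (v i (K i)) = v i (minn (J i) (K i)).
  by case: (leqP (J i) (K i)) => h; [rewrite min_l // v_mono | rewrite min_r // v_mono // ltnW].
have := phi_sm (fun i => v i (J i)) (fun i => v i (K i)) (fun i => f_box i _) (fun i => f_box i _).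
by rewrite (functional_extensionality _ _ vmax) (functional_extensionality _ _ vmin).
Qed.

Lemma greedy_stair_rhs_le w s pi : all_Delta w -> full_path s -> greedy_path w J0 s ->
  is_staircase d pi -> psi J0 + path_sum psi w J0 s <= stair_rhs pi w.
Proof.
move=> Dw full gp stair; rewrite stair_rhs_path_sum // lerD2l.
apply: (greedy_path_sum_min psi_sm Dw gp (staircase_perm_eq full stair)).
by move=> i; rewrite full.
Qed.

Lemma exists_greedy_staircase w : exists s, [/\ full_path s, greedy_path w J0 s &
  exists2 pi, is_staircase d pi & stair_rhs pi w = psi J0 + path_sum psi w J0 s].
Proof.
have [s [full gp]] := exists_greedy_path w J0 d.
have [pi stair fst_pi] := exists_staircase full.
by exists s; split => //; exists pi => //; rewrite stair_rhs_path_sum // fst_pi.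
Qed.

Lemma LPrelaxP x z mu : LPrelax x z mu <->
  (forall i, in_B (@p i) (x i) (z i)) /\
  forall pi, is_staircase d pi -> mu <= stair_rhs pi (fun i => Lsig ((sigma i)^-1)%g (z i)).
Proof.
split=> [[inB [w [Lw le_mu]]]|[inB le_mu]]; split => //.
  suff -> : (fun i => Lsig ((sigma i)^-1)%g (z i)) = w by [].
  apply: functional_extensionality_dep => i; rewrite -(LsigK (sigma i) (w i)).
  by congr Lsig; apply: functional_extensionality => k; rewrite Lw.
by exists (fun i => Lsig ((sigma i)^-1)%g (z i)); split => // i k; rewrite LsigKV.
Qed.

Lemma psi_perm (k : forall i, 'I_(d i).+1) :
  psi (fun i => ((sigma i)^-1)%g (k i)) = phi (fun i => f i (@p i (k i))).
Proof.
by rewrite /psi; congr phi; apply: functional_extensionality => i; rewrite inord_val permKV.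
Qed.

Lemma stair_rhs_prefix_ones (K : forall i, 'I_(d i).+1) mu :
  (forall pi, is_staircase d pi -> mu <= stair_rhs pi (fun i => prefix_ones (K i))) <->
  mu <= psi (fun i => K i).
Proof.
set w := fun i => prefix_ones (K i).
have Dw : all_Delta w by move=> i; apply: Delta_prefix_ones; rewrite -ltnS.
have value s : full_path s -> greedy_path w J0 s ->
    psi J0 + path_sum psi w J0 s = psi (fun i => K i).
  move=> full gp; rewrite (greedy_path_sum_indicator psi (K := fun i => K i) _ _ gp).
  - by rewrite addrC subrK.
  - by move=> i k; rewrite zext_prefix_ones // -ltnS.
  - by move=> i; rewrite -ltnS.
  - by move=> i; rewrite full.
  - by [].
have [s [full gp [pi stair eq_rhs]]] := exists_greedy_staircase w.
split=> [/(_ pi stair)|le_mu pi' stair']; first by rewrite eq_rhs value.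
by rewrite -(value s full gp) in le_mu; apply: le_trans le_mu (greedy_stair_rhs_le _ _ _ stair').
Qed.

Lemma LPrelax_grid (k : forall i, 'I_(d i).+1) x mu : (forall i, x i = @p i (k i)) ->
  LPrelax x (fun i => prefix_ones (k i)) mu <-> mu <= phi (fun i => f i (x i)).
Proof.
move=> xk; rewrite LPrelaxP.
have -> : (fun i => Lsig ((sigma i)^-1)%g (prefix_ones (k i))) =
          (fun i => prefix_ones (((sigma i)^-1)%g (k i))) :> forall i, 'I_(d i) -> R.
  by apply: functional_extensionality_dep => i; rewrite Lsig_prefix_ones.
have -> : (fun i => f i (x i)) = (fun i => f i (@p i (k i))).
  by apply: functional_extensionality => i; rewrite xk.
rewrite stair_rhs_prefix_ones psi_perm.
split=> [[] //|le_mu]; split=> // i; split; last by apply: Delta_prefix_ones; rewrite -ltnS.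
by rewrite xk; symmetry; apply: Bx_prefix_ones.
Qed.

Lemma hypograph_Eset x mu :
  hypograph p f phi x mu <-> exists z, Eset p f phi sigma x z mu.
Proof.
split=> [[grid le_mu]|[z [lp z01]]]; last first.
  have ex i : exists k : 'I_(d i).+1, [forall j, z i j == prefix_ones k j].
    by have [k ->] := Delta_binary (lp.1 i).2 (z01 i); exists k; apply/forallP.
  pose k i := xchoose (ex i).
  have zE : z = fun i => prefix_ones (k i).
    apply: functional_extensionality_dep => i; apply: functional_extensionality => j.
    exact/eqP/(forallP (xchooseP (ex i))).
  have xk i : x i = @p i (k i) by rewrite (lp.1 i).1 zE; apply: Bx_prefix_ones.
  by rewrite zE (LPrelax_grid _ xk) in lp; split=> // i; exists (k i).
have ex i : exists k : 'I_(d i).+1, x i == @p i k by have [k ->] := grid i; exists k.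
pose k i := xchoose (ex i).
have xk i : x i = @p i (k i) by apply/eqP/(xchooseP (ex i)).
exists (fun i => prefix_ones (k i)); split; first exact/(LPrelax_grid _ xk).
by move=> i j; apply: prefix_ones_binary.
Qed.

Definition z_of w : forall i, 'I_(d i) -> R := fun i => Lsig (sigma i) (w i).
Arguments z_of w i : clear implicits.
Definition x_of w : 'I_n -> R := fun i => Bx (@p i) (z_of w i).

Lemma z_of_comb t w w1 w2 : (forall i j, w i j = t * w1 i j + (1 - t) * w2 i j) ->
  forall i k, z_of w i k = t * z_of w1 i k + (1 - t) * z_of w2 i k.
Proof.
move=> wE i k; rewrite /z_of -Lsig_comb; congr (Lsig _ _ k).
by apply: functional_extensionality => j; apply: wE.
Qed.

Lemma x_of_comb t w w1 w2 : (forall i j, w i j = t * w1 i j + (1 - t) * w2 i j) ->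
  forall i, x_of w i = t * x_of w1 i + (1 - t) * x_of w2 i.
Proof.
move=> wE i; rewrite /x_of -Bx_comb; congr Bx.
by apply: functional_extensionality => k; apply: z_of_comb.
Qed.

Lemma LPrelax_shift x w w' mu s : LPrelax x (z_of w) mu -> full_path s ->
  greedy_path w J0 s -> all_Delta w' -> greedy_path w' J0 s ->
  LPrelax (x_of w') (z_of w') (mu + path_sum psi w' J0 s - path_sum psi w J0 s).
Proof.
have z_ofK v : (fun i => Lsig ((sigma i)^-1)%g (z_of v i)) = v.
  by apply: functional_extensionality_dep => i; rewrite /z_of LsigK.
rewrite !LPrelaxP !z_ofK => -[_ le_mu] full gp Dw' gp'.
split=> [i|pi stair]; first by split; [|apply: Lsig_Delta].
have [pi0 stair0 fst0] := exists_staircase full.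
have := le_mu pi0 stair0; rewrite stair_rhs_path_sum // fst0.
by have := greedy_stair_rhs_le Dw' full gp' stair; lra.
Qed.

Lemma LPrelax_nudged x w mu c gap e s : LPrelax x (z_of w) mu -> all_Delta w ->
  0 < c < 1 -> isolated w c gap -> `|e| <= gap -> full_path s -> greedy_path w J0 s ->
  LPrelax (x_of (nudged c e w)) (z_of (nudged c e w))
          (mu + path_sum psi (nudged c e w) J0 s - path_sum psi w J0 s).
Proof.
move=> lp Dw c01 iso le_e full gp; apply: (LPrelax_shift lp full gp).
  exact: nudged_Delta c01 le_e iso Dw.
exact: greedy_path_homo (nudged_homo c01 le_e iso) gp.
Qed.

Lemma LP_vertex_binary x z mu : is_vertex_LP p f phi sigma x z mu -> binaryz z.
Proof.
case=> lp vertex; pose w i := Lsig ((sigma i)^-1)%g (z i).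
have zE : z = z_of w by apply: functional_extensionality_dep => i; rewrite /z_of LsigKV.
have Dw : all_Delta w by move=> i; apply: Lsig_Delta; exact: (lp.1 i).2.
suff w01 i j : w i j = 0 \/ w i j = 1.
  move=> i j; have [k wk] := Delta_binary (Dw i) (w01 i).
  by rewrite zE /z_of wk Lsig_prefix_ones; apply: prefix_ones_binary.
apply: NNPP => /not_or_and [ne0 ne1].
have c01 : 0 < w i j < 1.
  have /andP[ge0 le1] := Delta_zext_bounds (Dw i) j.+1; rewrite zextS in ge0 le1.
  by rewrite !lt_neqAle ge0 le1 !andbT eq_sym; apply/andP; split; apply/eqP.
have [gap gap_gt0 iso] := exists_isolated w (w i j).
have [s [full gp _]] := exists_greedy_staircase w.
pose mu_of e := mu + path_sum psi (nudged (w i j) e w) J0 s - path_sum psi w J0 s.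
have muE : mu = 1 / 2 * mu_of gap + (1 - 1 / 2) * mu_of (- gap).
  suff : path_sum psi (nudged (w i j) gap w) J0 s +
         path_sum psi (nudged (w i j) (- gap) w) J0 s = 2 * path_sum psi w J0 s.
    by rewrite /mu_of; lra.
  by apply: path_sum_midpoint => i' k; rewrite !zext_nudged // nudge_midpoint.
have xE i' : x i' = x_of w i' by rewrite /x_of -zE; exact: (lp.1 i').1.
have half : 0 < (1 / 2 : R) < 1 by apply/andP; split; lra.
have gap_le : `|gap| <= gap by rewrite ger0_norm // ltW.
have Ngap_le : `|- gap| <= gap by rewrite normrN.
have mid := nudged_midpoint w (w i j) gap.
rewrite zE in lp vertex.
have [_ [eq_z _]] := vertex _ _ _ _ _ _ _
  (LPrelax_nudged lp Dw c01 iso gap_le full gp) (LPrelax_nudged lp Dw c01 iso Ngap_le full gp)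
  half (fun i' => etrans (xE i') (x_of_comb mid i')) (z_of_comb mid) muE.
have := congr1 (fun v => Lsig ((sigma i)^-1)%g v j) (functional_extensionality _ _ (eq_z i)).
by rewrite /= /z_of !LsigK /nudged /nudge eqxx; lra.
Qed.

End Formulation.

Theorem theorem1 (R : realType) (n : nat) (d : 'I_n -> nat)
  (p : forall i : 'I_n, 'I_(d i).+1 -> R) (f : 'I_n -> R -> R)
  (L U : 'I_n -> R) (phi : ('I_n -> R) -> R)
  (sigma : forall i : 'I_n, {perm 'I_(d i).+1}) :
  (0 < n)%N ->
  (forall i, 0 < d i)%N ->
  (forall i (j k : 'I_(d i).+1), (j < k)%N -> p i j < p i k) ->
  (forall i (j : 'I_(d i).+1), L i <= f i (p i j) <= U i) ->
  supermodular_on_box L U phi ->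
  (forall i (j k : 'I_(d i).+1), (j <= k)%N ->
     f i (p i (sigma i j)) <= f i (p i (sigma i k))) ->
  ideal_MIP_formulation_of_hypograph p f phi sigma.
Proof.
move=> _ _ _ f_box phi_sm f_mono.
have psi_sm := psi_grid_supermodular phi_sm f_box f_mono.
split=> [x mu|x z mu]; first exact: hypograph_Eset.
exact: LP_vertex_binary.
Qed.
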